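(* For every $n\ge0$, $Mlt_l(Q_n)\cong Mlt_r(Q_n)$.
   Context: Cayley--Dickson loops: $Q_0=\{1,-1\}\subset\mathbb{R}$ with conjugation $x^*=x$. For $n\ge1$, $Q_n=\{(x,0),(x,1)\mid x\in Q_{n-1}\}$ with multiplication $(x,0)(y,0)=(xy,0)$, $(x,0)(y,1)=(yx,1)$, $(x,1)(y,0)=(xy^*,1)$, $(x,1)(y,1)=(-y^*x,0)$ and conjugation $(x,0)^*=(x^*,0)$, $(x,1)^*=(-x,1)$, where $-(x,a)=(-x,a)$. $Q_n$ is a loop with neutral element $1=(1,0,\dots,0)$. For a loop $Q$, $L_x(a)=xa$, $R_x(a)=ax$, $Mlt_l(Q)=\langle L_x\mid x\in Q\rangle$, $Mlt_r(Q)=\langle R_x\mid x\in Q\rangle$. *)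

From HB Require Import structures.
From mathcomp Require Import all_boot all_fingroup.
Set Implicit Arguments. Unset Strict Implicit. Unset Printing Implicit Defensive.

(* Carrier of Q_n.  Q_0 = bool, with false = 1 and true = -1.
   Q_(m+1) = Q_m * bool, the pair (x, a) with a = false for (x,0), a = true for (x,1). *)
Fixpoint CDcar (n : nat) : finType :=
  match n with
  | 0 => bool
  | m.+1 => (CDcar m * bool)%type
  end.

Fixpoint CDops (n : nat) :
  (CDcar n -> CDcar n) * (CDcar n -> CDcar n) * (CDcar n -> CDcar n -> CDcar n) :=
  match n return (CDcar n -> CDcar n) * (CDcar n -> CDcar n)
                 * (CDcar n -> CDcar n -> CDcar n) with
  | 0 => (negb, id, addb)
  | m.+1 =>
    let: (ng, cj, ml) := CDops m in
    ((fun u : CDcar m * bool => (ng u.1, u.2)),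
     (fun u : CDcar m * bool => if u.2 then (ng u.1, true) else (cj u.1, false)),
     (fun u v : CDcar m * bool =>
        match u.2, v.2 with
        | false, false => (ml u.1 v.1, false)
        | false, true  => (ml v.1 u.1, true)
        | true,  false => (ml u.1 (cj v.1), true)
        | true,  true  => (ng (ml (cj v.1) u.1), false)
        end))
  end.

Definition CDneg n : CDcar n -> CDcar n := (CDops n).1.1.
Definition CDconj n : CDcar n -> CDcar n := (CDops n).1.2.
Definition CDmul n : CDcar n -> CDcar n -> CDcar n := (CDops n).2.

Fixpoint CDone (n : nat) : CDcar n :=
  match n return CDcar n with 0 => false | m.+1 => (CDone m, false) end.

Definition Mlt_l (n : nat) : {set {perm CDcar n}} :=
  <<[set p : {perm CDcar n} | [exists x, [forall a, p a == CDmul x a]]]>>%g.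

Definition Mlt_r (n : nat) : {set {perm CDcar n}} :=
  <<[set p : {perm CDcar n} | [exists x, [forall a, p a == CDmul a x]]]>>%g.

From HB Require Import structures.
From mathcomp Require Import all_boot all_fingroup.
Set Implicit Arguments. Unset Strict Implicit. Unset Printing Implicit Defensive.

(* Mlt_l(Q_n) and Mlt_r(Q_n) are conjugate inside Sym(Q_n), hence isomorphic.
   The conjugation x |-> conj x of a Cayley--Dickson loop is an involutive
   anti-automorphism: conj (conj x) = x and conj (ab) = conj b conj a.
   Writing J for this permutation, J L_x J = R_(conj x), so conjugation by J
   maps the generating set of Mlt_l onto that of Mlt_r. *)

Section AntiAutomorphism.

Variables (T : finType) (mul : T -> T -> T) (j : T -> T).
Hypothesis jK : involutive j.
Hypothesis jM : forall a b, j (mul a b) = mul (j b) (j a).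

Definition left_translations : {set {perm T}} :=
  [set p : {perm T} | [exists x, [forall a, p a == mul x a]]].
Definition right_translations : {set {perm T}} :=
  [set p : {perm T} | [exists x, [forall a, p a == mul a x]]].

Definition anti_perm : {perm T} := perm (can_inj jK).

Lemma anti_permV : (anti_perm^-1)%g = anti_perm.
Proof.
apply: (mulgI anti_perm); rewrite mulgV.
by apply/permP=> a; rewrite perm1 permM !permE /= jK.
Qed.

Lemma anti_conjE (p : {perm T}) a : (p ^ anti_perm)%g a = j (p (j a)).
Proof. by rewrite conjgE anti_permV !permM !permE. Qed.

Lemma conj_left_translations :
  (left_translations :^ anti_perm)%g = right_translations.
Proof.
apply/setP=> p; rewrite mem_conjg anti_permV !inE.
apply/existsP/existsP=> -[x /forallP Hx]; exists (j x); apply/forallP=> a.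
- have := eqP (Hx (j a)); rewrite anti_conjE jK => pjaE.
  by rewrite -[p a]jK pjaE jM jK.
- by rewrite anti_conjE (eqP (Hx _)) jM jK.
Qed.

Lemma left_right_mult_isog :
  <<left_translations>>%g \isog <<right_translations>>%g.
Proof. by rewrite -conj_left_translations genJ conj_isog. Qed.

End AntiAutomorphism.

Record cd_laws (T : Type) (ops : (T -> T) * (T -> T) * (T -> T -> T)) : Prop :=
  CDLaws {
    cd_negK : involutive ops.1.1;
    cd_conjK : involutive ops.1.2;
    cd_conjN : forall a, ops.1.2 (ops.1.1 a) = ops.1.1 (ops.1.2 a);
    cd_mulNl : forall a b, ops.2 (ops.1.1 a) b = ops.1.1 (ops.2 a b);
    cd_mulNr : forall a b, ops.2 a (ops.1.1 b) = ops.1.1 (ops.2 a b);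
    cd_conjM : forall a b, ops.1.2 (ops.2 a b) = ops.2 (ops.1.2 b) (ops.1.2 a)
  }.

Definition cd_double (T : Type) (ops : (T -> T) * (T -> T) * (T -> T -> T)) :
    ((T * bool) -> T * bool) * ((T * bool) -> T * bool)
    * ((T * bool) -> (T * bool) -> T * bool) :=
  let: (ng, cj, ml) := ops in
  ((fun u => (ng u.1, u.2)),
   (fun u => if u.2 then (ng u.1, true) else (cj u.1, false)),
   (fun u v =>
      match u.2, v.2 with
      | false, false => (ml u.1 v.1, false)
      | false, true  => (ml v.1 u.1, true)
      | true,  false => (ml u.1 (cj v.1), true)
      | true,  true  => (ng (ml (cj v.1) u.1), false)
      end)).

Lemma cd_laws_double (T : Type) (ops : (T -> T) * (T -> T) * (T -> T -> T)) :
  cd_laws ops -> cd_laws (cd_double ops).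
Proof.
case: ops => [[ng cj] ml] [] /= ngK cjK cjN mlNl mlNr cjM.
split.
- by case=> a s /=; rewrite ngK.
- by case=> a [] /=; rewrite ?ngK ?cjK.
- by case=> a [] /=; rewrite ?cjN.
- by case=> a [] [b []] /=; do ?[rewrite mlNl|rewrite mlNr|rewrite cjN|rewrite ngK].
- by case=> a [] [b []] /=; do ?[rewrite mlNl|rewrite mlNr|rewrite cjN|rewrite ngK].
- case=> a [] [b []] /=;
    by do ?[rewrite cjM|rewrite cjK|rewrite mlNl|rewrite mlNr|rewrite cjN|rewrite ngK].
Qed.

Lemma CDops_laws (n : nat) : cd_laws (CDops n).
Proof.
elim: n => [|m IH]; last exact: (cd_laws_double IH).
by split=> [[]|[]|[]|[] []|[] []|[] []].
Qed.

Lemma CDconjK (n : nat) : involutive (@CDconj n).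
Proof. exact: cd_conjK (CDops_laws n). Qed.

Lemma CDconjM (n : nat) (a b : CDcar n) :
  CDconj (CDmul a b) = CDmul (CDconj b) (CDconj a).
Proof. by rewrite /CDconj /CDmul (cd_conjM (CDops_laws n)). Qed.

Theorem mainTheorem11 (n : nat) : Mlt_l n \isog Mlt_r n.
Proof. exact: (left_right_mult_isog (@CDconjK n) (@CDconjM n)). Qed.
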